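(* Let $G$ be a finite nonabelian group. Then $\mathcal{X}=\bigcup_{g\in G\setminus Z(G)}\mathrm{Irr}(G/[g,G])$, and consequently $K(G)=\bigcap_{g\in G\setminus Z(G)}[g,G]$.
   Context: For $\chi\in\mathrm{Irr}(G)$, the center of $\chi$ is $Z(\chi)=\{g\in G : |\chi(g)|=\chi(1)\}$. Let $\mathcal{X}=\{\chi\in\mathrm{Irr}(G) : Z(\chi)>Z(G)\}$ (strict containment) and $K(G)=\bigcap_{\chi\in\mathcal{X}}\ker(\chi)$. For $g\in G$, $[g,G]$ is the subgroup generated by $\{[g,x] : x\in G\}$; it is normal in $G$. $\mathrm{Irr}(G/[g,G])$ is identified with the set of $\chi\in\mathrm{Irr}(G)$ with $[g,G]\le\ker(\chi)$. *)

From mathcomp Require Import all_boot all_order all_algebra all_fingroup all_solvable all_field all_character.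
Set Implicit Arguments. Unset Strict Implicit. Unset Printing Implicit Defensive.
Import GroupScope.

Definition calX (gT : finGroupType) (G : {group gT}) : {set Iirr G} :=
  [set i : Iirr G | 'Z(G) \proper ('Z(('chi[G]_i)%R))%CF].

Definition KG (gT : finGroupType) (G : {group gT}) : {set gT} :=
  \bigcap_(i in calX G) cfker ('chi[G]_i)%R.

Definition gcommG (gT : finGroupType) (g : gT) (G : {set gT}) : {set gT} :=
  [~: [set g], G].

(* For irreducible chi, Z(chi)/ker chi = Z(G/ker chi), so g in G lies in Z(chi)
   exactly when [g, G] <= ker chi.  As Z(G) <= Z(chi) always holds, chi is in X
   iff Z(chi) contains some noncentral g, i.e. iff chi is in Irr(G/[g, G]) for
   such a g.  Then K(G) is the intersection over noncentral g of the kernels of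
   all of Irr(G/[g, G]), and that intersection is [g, G] because [g, G] <| G. *)
From mathcomp Require Import all_boot all_order all_algebra all_fingroup all_solvable all_field all_character.
Import GroupScope.

Section GcommG.

Variables (gT : finGroupType) (G : {group gT}).

Lemma gcommG_normal (g : gT) : g \in G -> gcommG g G <| G.
Proof.
move=> Gg; rewrite /normal normsRr // andbT.
by rewrite (subset_trans (commSg G _) (der1_subG G)) ?sub1set.
Qed.

Lemma cfcenter_irr_gcommG (i : Iirr G) (g : gT) : g \in G ->
  (g \in 'Z(('chi_i)%R)%CF) = (gcommG g G \subset cfker ('chi_i)%R).
Proof.
move=> Gg; have nKG := normal_norm (cfker_normal ('chi_i)%R).
have nKg : [set g] \subset 'N(cfker ('chi_i)%R) by rewrite sub1set (subsetP nKG).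
have sKZ := normal_sub (cfker_center_normal ('chi_i)%R).
rewrite -quotient_cents2 // -sub1set -(quotientSGK nKg sKZ) cfcenter_eq_center.
by rewrite subsetI quotientS ?sub1set.
Qed.

Lemma calXE :
  calX G = [set i : Iirr G | [exists g in G :\: 'Z(G), gcommG g G \subset cfker ('chi_i)%R]].
Proof.
apply/setP=> i; rewrite !inE properE.
have ->: 'Z(G) \subset 'Z(('chi_i)%R)%CF by rewrite -cap_cfcenter_irr (bigcap_inf i).
apply/subsetPn/existsP => [[g Zg notDg] | [g /andP[/setDP[Gg notDg] sKg]]].
  have Gg := subsetP (cfcenter_sub ('chi_i)%R) g Zg.
  by exists g; rewrite inE notDg Gg -cfcenter_irr_gcommG.
by exists g; rewrite // cfcenter_irr_gcommG.
Qed.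

Lemma KGE : KG G = \bigcap_(g in G :\: 'Z(G)) gcommG g G.
Proof.
apply/eqP; rewrite eqEsubset /KG calXE; apply/andP; split.
  apply/bigcapsP=> g Dg; have /setDP[Gg _] := Dg.
  have capE : \bigcap_(i | gcommG g G \subset cfker ('chi_i)%R) cfker ('chi_i)%R
      = gcommG g G := cap_cfker_normal (gcommG_normal g Gg).
  rewrite -capE; apply/bigcapsP=> i sKg; apply: bigcap_inf.
  by rewrite inE; apply/existsP; exists g; rewrite Dg.
apply/bigcapsP=> i; rewrite inE => /existsP[g /andP[Dg sKg]].
exact: subset_trans (bigcap_inf g Dg) sKg.
Qed.

End GcommG.

Theorem lemma2p5 (gT : finGroupType) (G : {group gT}) :
  ~~ abelian G ->
  calX G = [set i : Iirr G | [exists g in (G :\: 'Z(G)), gcommG g G \subset cfker ('chi[G]_i)%R]]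
  /\ KG G = \bigcap_(g in (G :\: 'Z(G))) gcommG g G.
Proof. by move=> _; split; [exact: calXE | exact: KGE]. Qed.
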